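(* Let $F$ be an algebraically closed field of characteristic $\neq 2$, $R=F[t]$ with the involution ${}^*$ described in the context, and let $A\in M_2(R)$ satisfy $A^*=-A$, $\det(A)\neq 0$ and $\gcd(A)=1$. Then $A$ is congruent to a matrix with zero diagonal, i.e. there is $S\in\mathrm{GL}_2(R)$ such that both diagonal entries of $S^*AS$ are $0$.
   Context: $R=F[t]$ is the polynomial ring over $F$, and ${}^*$ is the $F$-algebra involution of $R$ that is the identity on $F$ and sends $t$ to $-t$. For $A=(a_{ij})\in M_n(R)$, $A^*$ is the matrix whose $(i,j)$ entry is $a_{ji}^*$. $A$ is skew-hermitian if $A^*=-A$. Congruence: $B=S^*AS$ for some $S\in\mathrm{GL}_n(R)$. $\gcd(A)$ denotes the monic generator (or $0$) of the ideal of $R$ generated by all entries of $A$. *)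

From mathcomp Require Import all_boot all_algebra.
Set Implicit Arguments. Unset Strict Implicit. Unset Printing Implicit Defensive.
Import GRing.Theory.
Local Open Scope ring_scope.

Definition polyinv (F : fieldType) (p : {poly F}) : {poly F} := p \Po (- 'X).

Definition mxstar (F : fieldType) (m n : nat) (A : 'M[{poly F}]_(m, n))
  : 'M[{poly F}]_(n, m) := map_mx (@polyinv F) A^T.

Definition skew_hermitian (F : fieldType) (n : nat) (A : 'M[{poly F}]_n) : Prop :=
  mxstar A = - A.

(* gcd(A): the monic generator (or 0) of the ideal generated by all entries. *)
Definition gcd_mx (F : fieldType) (m n : nat) (A : 'M[{poly F}]_(m, n)) : {poly F} :=
  let g := \big[@gcdp F/0]_(i < m) \big[@gcdp F/0]_(j < n) A i j in
  (lead_coef g)^-1 *: g.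

(* Write A = [[a, b], [-b^*, d]] with a^* = -a and d^* = -d, so that D := det A = a d + b b^*
   satisfies D^* = D and, as gcd(A) = 1, D(0) = b(0)^2 <> 0.  A congruence by [[c, 1], [1, 0]],
   with c in F avoiding finitely many bad values at the roots of D, makes the corner a coprime
   to D.  Over an algebraically closed field D = u u^* with u coprime to u^*, by splitting each
   root pair {x, -x} of D between u and u^*.  Solving a x = u y^* - b y gives a vector
   v = (x, y) with v^* A = u^* (-y, x); dividing v by gcd(x, y) only rescales u^* by a
   constant k, and completing the primitive vector to a basis yields [[0, k u^*], [_, d']].
   As k u^* is coprime to its conjugate, a last unipotent congruence clears d'. *)

From HB Require Import structures.
From mathcomp Require Import all_boot all_algebra.
From mathcomp Require Import ring.
Set Implicit Arguments. Unset Strict Implicit. Unset Printing Implicit Defensive.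
Import GRing.Theory.
Local Open Scope ring_scope.

(* Shadows the (unused) complex conjugation notation of [ssrnum]. *)
Local Notation "p ^*" := (polyinv p) : ring_scope.

HB.instance Definition _ (F : fieldType) :=
  GRing.RMorphism.copy (@polyinv F) (comp_poly (- 'X)).

Lemma oppr_eq_self (F : fieldType) (x : F) : 2%:R != 0 :> F -> (- x == x) = (x == 0).
Proof.
by move=> two_nz; rewrite eq_sym -subr_eq0 opprK -mulr2n -mulr_natl mulf_eq0 (negPf two_nz).
Qed.

Section Involution.
Variable F : fieldType.
Implicit Types (p q : {poly F}) (x : F).

Lemma polyinvC x : x%:P^* = x%:P.
Proof. exact: comp_polyC. Qed.

Lemma polyinvX : ('X : {poly F})^* = - 'X.
Proof. exact: comp_polyX. Qed.

Lemma polyinvZ x p : (x *: p)^* = x *: p^*.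
Proof. exact: comp_polyZ. Qed.

Lemma polyinvK : involutive (@polyinv F).
Proof. by move=> p; rewrite /polyinv -comp_polyA rmorphN /= comp_polyX opprK comp_polyXr. Qed.

Lemma horner_polyinv p x : p^*.[x] = p.[- x].
Proof. by rewrite horner_comp hornerN hornerX. Qed.

Lemma size_polyinv p : size p^* = size p.
Proof. by rewrite size_comp_poly2 // size_polyN size_polyX. Qed.

Lemma polyinv_eq0 p : (p^* == 0) = (p == 0).
Proof. by rewrite -!size_poly_eq0 size_polyinv. Qed.

Lemma polyinv_XsubC x : ('X - x%:P)^* = - ('X + x%:P).
Proof. by rewrite rmorphB /= polyinvX polyinvC opprD. Qed.

Lemma polyinv_dvdp_eqp p : p^* %| p -> p^* %= p.
Proof. by move=> dvd; rewrite -dvdp_size_eqp // size_polyinv. Qed.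

Lemma coprimep_polyinv p q : coprimep p^* q^* = coprimep p q.
Proof.
suff coprimep_inv (r s : {poly F}) : coprimep r s -> coprimep r^* s^*.
  by apply/idP/idP => /coprimep_inv //; rewrite !polyinvK.
case/Bezout_eq1_coprimepP => -[v w] /= vw1; apply/Bezout_eq1_coprimepP.
by exists (v^*, w^*); rewrite /= -!rmorphM -rmorphD vw1 rmorph1.
Qed.

Lemma skew_poly_root0 p : 2%:R != 0 :> F -> p^* = - p -> root p 0.
Proof.
move=> two_nz skp; have := congr1 (horner^~ 0) skp.
by rewrite /= horner_polyinv oppr0 hornerN => /esym/eqP; rewrite oppr_eq_self.
Qed.

End Involution.

Definition mx2 (R : Type) (a b c d : R) : 'M[R]_2 :=
  \matrix_(i, j) if i == ord0 then (if j == ord0 then a else b)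
                 else (if j == ord0 then c else d).

Section Mx2.
Variables (R : Type) (a b c d : R).
Lemma mx2_00 : mx2 a b c d ord0 ord0 = a. Proof. by rewrite mxE. Qed.
Lemma mx2_01 : mx2 a b c d ord0 ord_max = b. Proof. by rewrite mxE. Qed.
Lemma mx2_10 : mx2 a b c d ord_max ord0 = c. Proof. by rewrite mxE. Qed.
Lemma mx2_11 : mx2 a b c d ord_max ord_max = d. Proof. by rewrite mxE. Qed.
End Mx2.
Definition mx2E := (mx2_00, mx2_01, mx2_10, mx2_11).

Lemma mx2_eta (R : Type) (A : 'M[R]_2) :
  A = mx2 (A ord0 ord0) (A ord0 ord_max) (A ord_max ord0) (A ord_max ord_max).
Proof.
apply/matrixP => i j; rewrite mxE.
by case: i j => [[|[|i]] ?] [[|[|j]] ?] //=; congr (A _ _); apply: val_inj.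
Qed.

Lemma mul_mx2 (R : pzRingType) (a b c d a' b' c' d' : R) :
  mx2 a b c d *m mx2 a' b' c' d' =
  mx2 (a * a' + b * c') (a * b' + b * d') (c * a' + d * c') (c * b' + d * d').
Proof.
apply/matrixP => i j; rewrite !mxE !big_ord_recl big_ord0 !mxE addr0.
by case: i j => [[|[|i]] ?] [[|[|j]] ?].
Qed.

Lemma det_mx2 (R : comPzRingType) (a b c d : R) : \det (mx2 a b c d) = a * d - b * c.
Proof.
rewrite (expand_det_row _ ord0) !big_ord_recl big_ord0 addr0 /cofactor !det_mx11 !mxE /=.
by rewrite expr0 expr1 mul1r mulN1r mulrN.
Qed.

Section Congruence.
Variable F : fieldType.
Implicit Types (a b c d : {poly F}) (A S : 'M[{poly F}]_2).

Lemma mxstarM m n p (A : 'M[{poly F}]_(m, n)) (B : 'M_(n, p)) :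
  mxstar (A *m B) = mxstar B *m mxstar A.
Proof. by rewrite /mxstar trmx_mul map_mxM. Qed.

Lemma mxstarK m n : cancel (@mxstar F m n) (@mxstar F n m).
Proof. by move=> A; apply/matrixP => i j; rewrite !mxE polyinvK. Qed.

Lemma det_mxstar n (A : 'M[{poly F}]_n) : \det (mxstar A) = (\det A)^*.
Proof. by rewrite /mxstar det_map_mx det_tr. Qed.

Lemma mxstar_mx2 a b c d : mxstar (mx2 a b c d) = mx2 a^* c^* b^* d^*.
Proof. by apply/matrixP => i j; rewrite !mxE; case: i j => [[|[|i]] ?] [[|[|j]] ?]. Qed.

Lemma skew_hermitian_mx2 a b c d :
  skew_hermitian (mx2 a b c d) <-> [/\ a^* = - a, c = - b^* & d^* = - d].
Proof.
rewrite /skew_hermitian mxstar_mx2; split => [skA | [-> -> ->]].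
  have entry i j := congr1 (fun M : 'M_2 => M i j) skA.
  have := entry ord0 ord0; have := entry ord_max ord0; have := entry ord_max ord_max.
  by rewrite /= !mxE /= => -> ->; rewrite opprK.
rewrite rmorphN /= polyinvK; apply/matrixP => i j; rewrite !mxE.
by case: i j => [[|[|i]] ?] [[|[|j]] ?] //=; rewrite opprK.
Qed.

Lemma skew_hermitian_congr A S :
  skew_hermitian A -> skew_hermitian (mxstar S *m A *m S).
Proof.
by rewrite /skew_hermitian !mxstarM mxstarK => ->; rewrite mulNmx mulmxN mulmxA.
Qed.

Lemma skew_hermitian_det_even A : skew_hermitian A -> (\det A)^* = \det A.
Proof. by move=> skA; rewrite -det_mxstar skA -scaleN1r detZ sqrrN expr1n mul1r. Qed.

Definition congruent_to_zero_diag A : Prop :=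
  exists S, S \in unitmx /\
    (mxstar S *m A *m S) ord0 ord0 = 0 /\ (mxstar S *m A *m S) ord_max ord_max = 0.

Lemma congruent_to_zero_diag_congr A S : S \in unitmx ->
  congruent_to_zero_diag (mxstar S *m A *m S) -> congruent_to_zero_diag A.
Proof.
move=> S_unit [T [T_unit zdT]]; exists (S *m T).
by rewrite unitmx_mul S_unit T_unit mxstarM !mulmxA; move: zdT; rewrite !mulmxA.
Qed.

Lemma gcd_mx_eq1_nonroot m n (A : 'M[{poly F}]_(m, n)) x :
  gcd_mx A = 1 -> exists i j, ~~ root (A i j) x.
Proof.
move=> gcdA1; suff : ~~ [forall i, forall j, root (A i j) x].
  by rewrite negb_forall => /existsP[i]; rewrite negb_forall => /existsP[j]; exists i, j.
apply/negP => /forallP all_root.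
have : root (gcd_mx A) x.
  rewrite /gcd_mx -mul_polyC rootM; apply/orP; right.
  apply: (big_ind (root^~ x)) => [|p q rp rq|i _]; rewrite ?root0 ?root_gcd ?rp ?rq //.
  apply: (big_ind (root^~ x)) => [|p q rp rq|j _]; rewrite ?root0 ?root_gcd ?rp ?rq //.
  exact: forallP (all_root i) j.
by rewrite gcdA1; apply/negP/root1.
Qed.

Lemma skew_det_nondeg A x : skew_hermitian A -> gcd_mx A = 1 -> root (\det A) x ->
  ~~ [&& root (A ord0 ord0) x, root (A ord0 ord_max + A ord_max ord0) x
       & root (A ord_max ord_max) x].
Proof.
move=> skA gcdA1; move: (skA); rewrite {1}[A]mx2_eta => /skew_hermitian_mx2[_ bE _].
rewrite {1}[A]mx2_eta det_mx2 bE mulrN opprK => Dx; apply/and3P => -[ax bx dx].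
move: bx Dx; rewrite /root hornerD hornerN subr_eq0 => /eqP bx.
rewrite hornerD !hornerM (eqP ax) mul0r add0r -bx mulf_eq0 orbb => b0.
have [i [j]] := gcd_mx_eq1_nonroot x gcdA1.
rewrite [A]mx2_eta bE mxE; case: i j => [[|[|i]] ?] [[|[|j]] ?] //=;
  by rewrite ?rootN /root -?bx ?(eqP ax) ?(eqP dx) ?(eqP b0) ?eqxx.
Qed.

Lemma skew_det_root0 A : 2%:R != 0 :> F -> skew_hermitian A -> gcd_mx A = 1 ->
  ~~ root (\det A) 0.
Proof.
move=> two_nz skA gcdA1; apply/negP => D0.
move: (skA) (skew_det_nondeg skA gcdA1 D0).
rewrite {1}[A]mx2_eta => /skew_hermitian_mx2[ska -> skd].
rewrite (skew_poly_root0 two_nz ska) (skew_poly_root0 two_nz skd) /root.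
by rewrite hornerD hornerN horner_polyinv oppr0 subrr eqxx.
Qed.

End Congruence.

Section Reduction.
Variable F : fieldType.
Implicit Types (a b d u w x y : {poly F}) (A : 'M[{poly F}]_2).

Lemma zero_diag_of_coprime_offdiag A : 2%:R != 0 :> F ->
  skew_hermitian A -> A ord0 ord0 = 0 ->
  coprimep (A ord0 ord_max) (A ord0 ord_max)^* -> congruent_to_zero_diag A.
Proof.
rewrite [A]mx2_eta !mx2E => two_nz /skew_hermitian_mx2[_ -> skd] ->.
set b := A _ ord_max; set d := A ord_max ord_max.
case/Bezout_eq1_coprimepP => -[s t] /= st1.
have st1' : s^* * b^* + t^* * b = 1.
  by move/(congr1 (@polyinv F)): st1; rewrite rmorphD !rmorphM /= polyinvK rmorph1.
pose h : {poly F} := (2%:R^-1)%:P.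
have h2 : h * 2%:R = 1 by rewrite -polyC_natr -polyCM mulVf.
have hK : h^* = h := polyinvC _.
(* [p := t + s^*] satisfies [p b^* + p^* b = 2], so [z := d p / 2] has [z^* b - z b^* = - d]. *)
pose z := h * d * (t + s^*).
exists (mx2 1 z 0 1); split.
  by rewrite unitmxE det_mx2 mulr1 mulr0 subr0 unitr1.
rewrite mxstar_mx2 !mul_mx2 !mx2E /z !rmorphM rmorphD /= polyinvK rmorph1 hK skd -/d.
split; first by ring.
transitivity (d * (1 - h * ((s * b + t * b^*) + (s^* * b^* + t^* * b)))); first by ring.
by rewrite st1 st1' h2 subrr mulr0.
Qed.

(* [(x, y)^* A = w (-y, x)], i.e. [v^* A u = w det (v, u)] for [v = (x, y)] and all [u]. *)
Definition form_eq_det A w x y : Prop :=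
  x^* * A ord0 ord0 + y^* * A ord_max ord0 = - (w * y) /\
  x^* * A ord0 ord_max + y^* * A ord_max ord_max = w * x.

Lemma congr_of_form_eq_det A w x y : coprimep x y -> form_eq_det A w x y ->
  exists S, S \in unitmx /\
    (mxstar S *m A *m S) ord0 ord0 = 0 /\ (mxstar S *m A *m S) ord0 ord_max = w.
Proof.
case/Bezout_eq1_coprimepP => -[s t] /= st1 [form0 form1].
exists (mx2 x (- t) y s); split.
  by rewrite unitmxE det_mx2 mulNr opprK [x * s]mulrC st1 unitr1.
rewrite [A]mx2_eta mxstar_mx2 !mul_mx2 !mx2E form0 form1; split; first by ring.
by rewrite -[w in RHS]mulr1 -st1; ring.
Qed.

Lemma form_eq_det_div_gcd A w x y : (x != 0) || (y != 0) ->
  coprimep (gcdp x y)^* w -> form_eq_det A w x y ->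
  exists2 k : F, k != 0 & form_eq_det A (k *: w) (x %/ gcdp x y) (y %/ gcdp x y).
Proof.
move=> xy_nz coprime_g [form0 form1].
set g := gcdp x y in coprime_g *; set x' := x %/ g; set y' := y %/ g.
have g_nz : g != 0 by rewrite gcdp_eq0 negb_and.
have g'_nz : g^* != 0 by rewrite polyinv_eq0.
have xE : x = x' * g by rewrite divpK ?dvdp_gcdl.
have yE : y = y' * g by rewrite divpK ?dvdp_gcdr.
have form0' : g^* * (x'^* * A ord0 ord0 + y'^* * A ord_max ord0) = - (w * (g * y')).
  by rewrite -[g * y']mulrC -yE -form0 xE yE !rmorphM /=; ring.
have form1' : g^* * (x'^* * A ord0 ord_max + y'^* * A ord_max ord_max) = w * (g * x').
  by rewrite -[g * x']mulrC -xE -form1 xE yE !rmorphM /=; ring.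
(* [g^*], coprime to [w], divides [w g x'] and [w g y'], hence [g], a combination of both. *)
have g'_dvd_g : g^* %| g.
  have [[s t] /= st1] := Bezout_eq1_coprimepP _ _ (coprimep_div_gcd xy_nz).
  have g_sum : s * (g * x') + t * (g * y') = g by rewrite -[g in RHS]mulr1 -st1; ring.
  rewrite -[X in _ %| X]g_sum; apply: dvdp_add; apply: dvdp_mull;
    rewrite -(Gauss_dvdpr _ coprime_g).
    by rewrite -form1' dvdp_mulIl.
  by rewrite -dvdpNr -form0' dvdp_mulIl.
have [[c1 c2] /= /andP[c1_nz c2_nz] c12] := eqpP _ _ (polyinv_dvdp_eqp g'_dvd_g).
have gE : g = (c1 / c2)%:P * g^*.
  by rewrite mul_polyC mulrC -scalerA c12 scalerA mulVf ?scale1r.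
exists (c1 / c2); first by rewrite mulf_neq0 ?invr_eq0.
split; apply: (mulfI g'_nz); rewrite ?form0' ?form1' {1}gE -mul_polyC; ring.
Qed.

Lemma form_eq_det_of_solution a b d u x y : a != 0 -> a^* = - a ->
  a * d + b * b^* = u * u^* -> a * x = u * y^* - b * y ->
  form_eq_det (mx2 a b (- b^*) d) u^* x y.
Proof.
move=> a_nz ska detE solxy; rewrite /form_eq_det !mx2E.
have solxy' : a * x^* = b^* * y^* - u^* * y.
  by apply: oppr_inj; rewrite -mulNr -ska -rmorphM solxy rmorphB !rmorphM /= polyinvK opprB.
split; first by rewrite [x^* * a]mulrC solxy'; ring.
apply: (mulfI a_nz).
transitivity (b * (a * x^*) + (a * d) * y^*); first by ring.
by rewrite solxy' -[a * d](addrK (b * b^*)) detE mulrCA solxy; ring.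
Qed.

Lemma exists_coprime_solution a b d u : a != 0 -> a^* = - a ->
  a * d + b * b^* = u * u^* -> coprimep a u ->
  exists x y, [/\ y != 0, coprimep y u & a * x = u * y^* - b * y].
Proof.
move=> a_nz ska detE /Bezout_eq1_coprimepP[[r s] /= rs1].
have rs1' : s^* * u^* - r^* * a = 1.
  by move/(congr1 (@polyinv F)): rs1; rewrite rmorphD !rmorphM /= ska rmorph1 mulrN addrC.
(* [y0] works modulo [a] because there [s u = 1] and [u u^* = b b^*]. *)
pose y0 := 1 + b^* * s^*; pose x0 := d * s^* - r * b - u * r^*.
have sol0 : a * x0 = u * y0^* - b * y0.
  rewrite rmorphD rmorph1 rmorphM /= !polyinvK.
  transitivity (u * (1 + b * s) - b * y0 + u * (s^* * u^* - r^* * a - 1)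
    - s^* * (u * u^* - (a * d + b * b^*)) - b * (r * a + s * u - 1)).
    by rewrite /x0 /y0; ring.
  by rewrite rs1 rs1' detE !subrr !mulr0 addr0 !subr0.
have sol w : a * (x0 - u * w^* - b * w) = u * (y0 + a * w)^* - b * (y0 + a * w).
  by rewrite 2!mulrBr sol0 /y0 !rmorphD !rmorphM /= ska; ring.
(* With [w = u z - r b^* s^*] the second coordinate is [1] modulo [u]. *)
have yE z : y0 + a * (u * z - r * b^* * s^*) = 1 + u * (s * b^* * s^* + a * z).
  transitivity (1 + u * (s * b^* * s^* + a * z) + b^* * s^* * (1 - (r * a + s * u))).
    by rewrite /y0; ring.
  by rewrite rs1 subrr mulr0 addr0.
have coprime_y k : coprimep (1 + u * k) u.
  by apply/Bezout_eq1_coprimepP; exists (1, - k); rewrite /= mul1r mulNr [k * u]mulrC addrK.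
pose k0 := s * b^* * s^*.
suff [z y_nz] : exists z, 1 + u * (k0 + a * z) != 0.
  pose w := u * z - r * b^* * s^*.
  by exists (x0 - u * w^* - b * w), (y0 + a * w); rewrite sol yE.
have [y_eq0 | y_nz] := eqVneq (1 + u * k0) 0; last by exists 0; rewrite mulr0 addr0.
have u_nz : u != 0 by apply: contra_eq_neq y_eq0 => ->; rewrite mul0r addr0 oner_neq0.
by exists 1; rewrite mulr1 mulrDr addrA y_eq0 add0r mulf_neq0.
Qed.

Lemma zero_diag_of_coprime_corner A u : 2%:R != 0 :> F -> skew_hermitian A ->
  coprimep (A ord0 ord0) (\det A) -> \det A = u * u^* -> coprimep u u^* ->
  congruent_to_zero_diag A.
Proof.
move=> two_nz skA; have := skA; rewrite [A]mx2_eta det_mx2 !mx2E in skA *.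
case/skew_hermitian_mx2 => ska bE skd; rewrite bE in skA *.
set a := A ord0 ord0; set b := A ord0 ord_max; set d := A ord_max ord_max.
rewrite mulrN opprK => coprime_aD detE coprime_u.
have [a0 | a_nz] := eqVneq a 0.
  apply: zero_diag_of_coprime_offdiag; rewrite ?mx2E //.
  move: coprime_aD; rewrite a0 mul0r add0r coprime0p => bb1.
  have b_dvd1 : b %| 1 by rewrite -(eqp_dvdr _ bb1) dvdp_mulIl.
  exact: coprimep_dvdr b_dvd1 (coprime1p _).
have coprime_au : coprimep a u by move: coprime_aD; rewrite detE coprimepMr => /andP[].
have [x [y [y_nz coprime_yu sol]]] := exists_coprime_solution a_nz ska detE coprime_au.
have xy_nz : (x != 0) || (y != 0) by rewrite y_nz orbT.
have coprime_g : coprimep (gcdp x y)^* u^*.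
  by rewrite coprimep_polyinv (coprimep_dvdr (dvdp_gcdr x y) coprime_yu).
have [k k_nz form] :=
  form_eq_det_div_gcd xy_nz coprime_g (form_eq_det_of_solution a_nz ska detE sol).
have [S [S_unit [S00 S01]]] := congr_of_form_eq_det (coprimep_div_gcd xy_nz) form.
apply: (congruent_to_zero_diag_congr S_unit).
apply: zero_diag_of_coprime_offdiag => //; first exact: skew_hermitian_congr.
by rewrite S01 polyinvZ polyinvK coprimepZl // coprimepZr // coprimep_sym.
Qed.

End Reduction.

Lemma exists_coprime_quadratic (F : closedFieldType) (a e d D : {poly F}) :
  D != 0 -> (forall g, root D g -> ~~ [&& root a g, root e g & root d g]) ->
  exists c : F, coprimep (a * (c ^+ 2)%:P + e * c%:P + d) D.
Proof.
move=> D_nz nondeg; have [r Dr] := closed_field_poly_normal D.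
have rootD g : root D g = (g \in r).
  by rewrite {1}Dr rootZ ?lead_coef_eq0 // root_prod_XsubC.
(* [P g] is the new corner evaluated at the root [g] of [D], as a polynomial in [c]. *)
pose P g : {poly F} := a.[g]%:P * 'X^2 + e.[g]%:P * 'X + d.[g]%:P.
have P_nz g : g \in r -> P g != 0.
  rewrite -rootD => /nondeg; apply: contraTneq => P0.
  have coef k := congr1 (fun p : {poly F} => p`_k) P0.
  move: (coef 0%N) (coef 1%N) (coef 2%N).
  rewrite !coefD !coefCM !coefXn !coefX !coefC /= !mulr0 !mulr1 !addr0 !add0r.
  by rewrite /root => -> -> ->; rewrite eqxx.
have [c Pc] : exists c, ~~ root (\prod_(g <- r) P g) c.
  by apply/closed_nonrootP; rewrite prodf_seq_neq0; apply/allP => g /P_nz.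
exists c; rewrite coprimep_sym; apply: Pdiv.ClosedField.root_coprimep => g.
rewrite rootD => gr; move: Pc; rewrite /root horner_prod prodf_seq_neq0 => /allP/(_ g gr).
by rewrite /P !hornerE.
Qed.

Section Norms.
Variable F : fieldType.
Implicit Types (p u D : {poly F}) (x : F).

Lemma norm_XsubC x : ('X - x%:P) * ('X - x%:P)^* = (x ^+ 2)%:P - 'X^2.
Proof. by rewrite polyinv_XsubC polyC_exp; ring. Qed.

Lemma even_poly_factor D x : 2%:R != 0 :> F -> x != 0 -> D^* = D -> root D x ->
  exists2 D1, D = ((x ^+ 2)%:P - 'X^2) * D1 & D1^* = D1.
Proof.
move=> two_nz x_nz evenD Dx; have [q Dq] := factor_theorem _ _ Dx.
have : root q (- x).
  have : root D (- x) by rewrite -evenD /root horner_polyinv opprK.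
  by rewrite Dq rootM root_XsubC oppr_eq_self // (negPf x_nz) orbF.
case/factor_theorem => q1 qE.
set K := (x ^+ 2)%:P - 'X^2.
have K_nz : K != 0 by rewrite /K -norm_XsubC mulf_neq0 ?polyinv_eq0 ?polyXsubC_eq0.
have K_even : K^* = K by rewrite /K -norm_XsubC rmorphM /= polyinvK mulrC.
have DK : D = K * - q1 by rewrite Dq qE /K -norm_XsubC polyinv_XsubC polyCN; ring.
by exists (- q1) => //; move: evenD; rewrite DK rmorphM /= K_even => /(mulfI K_nz).
Qed.

Lemma coprimep_norm_XsubC u x : 2%:R != 0 :> F -> x != 0 ->
  coprimep u u^* -> ~~ root u (- x) -> coprimep (('X - x%:P) * u) (('X - x%:P) * u)^*.
Proof.
move=> two_nz x_nz coprime_u ux.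
rewrite [(_ * u)^*]rmorphM /= polyinv_XsubC mulNr -[- (_ * u^*)]scaleN1r.
rewrite coprimepZr ?oppr_eq0 ?oner_eq0 //.
have -> : 'X + x%:P = 'X - (- x)%:P by rewrite polyCN opprK.
rewrite coprimepMl !coprimepMr coprime_u andbT.
rewrite [coprimep _ u^*]coprimep_sym !coprimep_XsubC root_XsubC /root horner_polyinv ux.
by rewrite oppr_eq_self // x_nz.
Qed.

End Norms.

Lemma polyC_norm_split (F : closedFieldType) (k : F) :
  k != 0 -> exists2 u, k%:P = u * u^* & coprimep u u^*.
Proof.
move=> k_nz; have [e] : exists e, root ('X^2 - k%:P) e.
  by apply/closed_rootP; rewrite size_XnsubC.
rewrite /root !hornerE subr_eq0 => /eqP ek.
have e_nz : e != 0 by apply: contra_eq_neq ek => ->; rewrite expr0n eq_sym.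
exists e%:P; first by rewrite polyinvC -polyCM -expr2 ek.
by rewrite polyinvC -[e%:P]mulr1 mul_polyC coprimepZl ?coprime1p.
Qed.

Lemma polyinv_norm_split (F : closedFieldType) (D : {poly F}) :
  2%:R != 0 :> F -> D^* = D -> ~~ root D 0 -> exists2 u, D = u * u^* & coprimep u u^*.
Proof.
move=> two_nz; move: {2}(size D) (leqnn (size D)) => n.
elim: n D => [|n IHn] D size_D evenD D0.
  by move: size_D D0; rewrite leqn0 size_poly_eq0 => /eqP->; rewrite root0.
have [/closed_rootP[x Dx] | /negPn/size_poly1P[k k_nz ->]] := boolP (size D != 1); last first.
  exact: polyC_norm_split.
have x_nz : x != 0 by apply: contraNneq D0 => <-.
have [D1 DE evenD1] := even_poly_factor two_nz x_nz evenD Dx.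
have [K_nz D1_nz] : (x ^+ 2)%:P - 'X^2 != 0 /\ D1 != 0.
  by apply/andP; rewrite -negb_or -mulf_eq0 -DE; apply: contraNneq D0 => ->; rewrite root0.
have [u1 D1E coprime_u1] : exists2 u1, D1 = u1 * u1^* & coprimep u1 u1^*.
  apply: IHn => //; last by move: D0; rewrite DE rootM negb_or => /andP[].
  have size_K : size ((x ^+ 2)%:P - 'X^2) = 3%N.
    by rewrite addrC size_polyDl size_polyN size_polyXn // (leq_ltn_trans (size_polyC_leq1 _)).
  by move: size_D; rewrite DE size_mul // size_K !addSn ltnS => /ltnW.
(* The sign of [y = +-x] is chosen so that ['X - y] is coprime to [u1^*]. *)
have [y yx u1y] : exists2 y, y ^+ 2 = x ^+ 2 & ~~ root u1 (- y).
  have [u1x | u1x] := boolP (root u1 (- x)); last by exists x.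
  exists (- x); rewrite ?sqrrN // opprK.
  by have := coprimep_root coprime_u1 u1x; rewrite horner_polyinv opprK.
have y_nz : y != 0 by move: (expf_neq0 2 x_nz); rewrite -yx expf_eq0.
exists (('X - y%:P) * u1); last exact: coprimep_norm_XsubC.
by rewrite DE D1E -yx -norm_XsubC [(_ * u1)^*]rmorphM /=; ring.
Qed.

Lemma congr_corner_quadratic (F : fieldType) (A : 'M[{poly F}]_2) (c : F) :
  exists2 S, S \in unitmx &
    \det (mxstar S *m A *m S) = \det A /\
    (mxstar S *m A *m S) ord0 ord0 = A ord0 ord0 * (c ^+ 2)%:P
      + (A ord0 ord_max + A ord_max ord0) * c%:P + A ord_max ord_max.
Proof.
exists (mx2 c%:P 1 1 0); first by rewrite unitmxE det_mx2 mulr0 mul1r sub0r unitrN unitr1.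
split; first by rewrite !det_mulmx det_mxstar det_mx2 mulr0 mul1r sub0r rmorphN rmorph1
  mulrN1 mulN1r opprK.
by rewrite {1}[A]mx2_eta mxstar_mx2 !mul_mx2 !mx2E polyinvC rmorph1 polyC_exp; ring.
Qed.

Theorem proposition3p3 (F : closedFieldType) (A : 'M[{poly F}]_2) :
  (2%:R : F) != 0 ->
  skew_hermitian A ->
  \det A != 0 ->
  gcd_mx A = 1 ->
  exists S : 'M[{poly F}]_2,
    S \in unitmx /\
    (mxstar S *m A *m S) ord0 ord0 = 0 /\ (mxstar S *m A *m S) ord_max ord_max = 0.
Proof.
move=> two_nz skA detA_nz gcdA1.
have [c coprime_c] :=
  exists_coprime_quadratic detA_nz (fun x => skew_det_nondeg skA gcdA1 (x := x)).
have [S S_unit [detS cornerS]] := congr_corner_quadratic A c.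
apply: (congruent_to_zero_diag_congr S_unit).
have [u Du coprime_u] :=
  polyinv_norm_split two_nz (skew_hermitian_det_even skA) (skew_det_root0 two_nz skA gcdA1).
apply: (@zero_diag_of_coprime_corner _ _ u); rewrite ?cornerS ?detS //.
exact: skew_hermitian_congr.
Qed.
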